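(* In the setting below, $$\left|\mathbb{E}\left(\sum_{i=1}^{mn}(1-w_i)\left(z_i-\frac1n\right)\right)\right|\le 2\sqrt{6\sum_{i=1}^{mn}\mathbb{E}(z_i)+8m}.$$
   Context: Setting: $m,n$ are positive integers with $n\ge 1200\sqrt m$. A deck of $mn$ cards with $m$ copies of each label $1,\dots,n$ is shuffled uniformly at random. A fixed guessing strategy is used: in round $t=1,\dots,mn$ the Guesser guesses $g_t\in\{1,\dots,n\}$, a function (possibly randomized independently of the deck) of $y_1,\dots,y_{t-1}$, where $y_t\in\{0,1\}$ is the indicator that the $t$-th card has label $g_t$. For a vector $v$, $v_{\le t}:=(v_1,\dots,v_t)$. For $1\le k\le n$, $1\le t\le mn+1$: $a(k,t):=|\{1\le i<t: g_i=k\}|$. Let $Y:=\lfloor \tfrac16\sqrt m\, n\rfloor$. Let $(z_1,\dots,z_{mn})\in\{0,1\}^{mn}$ be a random vector (on an extension of the probability space), with $c(k,t):=|\{1\le i<t: g_i=k,\ z_i=1\}|$, satisfying almost surely: (a) for all $k,t$: $m-\max\{mn-a(k,t)-Y,0\}\le c(k,t)\le m$; (b) for each $t$, conditioned on $g_{\le t},y_{\le t}$, the coordinates of $z_{\le t}$ are mutually independent and independent from $g_{\le mn},y_{\le mn}$; (c) for each $t$, if $a(g_t,t)<mn-Y$ then $\mathbb{E}(z_t\mid g_{\le t},z_{\le t-1})=\frac{m-c(g_t,t)}{mn-a(g_t,t)-Y}$; (d) for each $t$, if $\mathbb{E}(y_t\mid g_{\le t},y_{\le t-1})\le\mathbb{E}(z_t\mid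 g_{\le t},z_{\le t-1})$ then $y_t\le z_t$. (Such a vector exists.) For $1\le t\le mn$, $w_t\in\{0,1\}$ is the indicator of the event $a(g_t,t)\le \frac12 mn$. *)

From mathcomp Require Import all_boot all_order all_algebra.
From mathcomp Require Import reals.
Set Implicit Arguments. Unset Strict Implicit. Unset Printing Implicit Defensive.
Import Order.TTheory GRing.Theory Num.Theory.
Local Open Scope ring_scope.

Definition is_pmf (R : realType) (Omega : finType) (P : Omega -> R) : Prop :=
  (forall w, 0 <= P w) /\ \sum_(w : Omega) P w = 1.

Definition Pr (R : realType) (Omega : finType) (P : Omega -> R) (A : pred Omega) : R :=
  \sum_(w : Omega | A w) P w.

Definition Exp (R : realType) (Omega : finType) (P : Omega -> R) (X : Omega -> R) : R :=
  \sum_(w : Omega) P w * X w.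

(* conditional expectation E(X | V), evaluated at the outcome w0
   (meaningful, and only used, when P w0 > 0, i.e. almost surely) *)
Definition condE (R : realType) (Omega : finType) (P : Omega -> R)
    (X : Omega -> R) (T : eqType) (V : Omega -> T) (w0 : Omega) : R :=
  (\sum_(w : Omega | V w == V w0) P w * X w) / (\sum_(w : Omega | V w == V w0) P w).

Definition condPr (R : realType) (Omega : finType) (P : Omega -> R)
    (A : pred Omega) (T : eqType) (V : Omega -> T) (w0 : Omega) : R :=
  Pr P (fun w => A w && (V w == V w0)) / Pr P (fun w => V w == V w0).

(* v_{<= t} (paper's 1-indexed round t+1 <-> our 0-indexed round t) *)
Definition pre_le (Omega : finType) (N : nat) (T : Type) (f : 'I_N -> Omega -> T)
    (t : nat) (w : Omega) : {ffun 'I_N -> option T} :=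
  [ffun i : 'I_N => if (i <= t)%N then Some (f i w) else None].

Definition pre_lt (Omega : finType) (N : nat) (T : Type) (f : 'I_N -> Omega -> T)
    (t : nat) (w : Omega) : {ffun 'I_N -> option T} :=
  [ffun i : 'I_N => if (i < t)%N then Some (f i w) else None].

Definition cnt_a (Omega : finType) (N n : nat) (g : 'I_N -> Omega -> 'I_n)
    (k : 'I_n) (t : nat) (w : Omega) : nat :=
  #|[set i : 'I_N | (i < t)%N && (g i w == k)]|.

Definition cnt_c (Omega : finType) (N n : nat) (g : 'I_N -> Omega -> 'I_n)
    (z : 'I_N -> Omega -> bool) (k : 'I_n) (t : nat) (w : Omega) : nat :=
  #|[set i : 'I_N | [&& (i < t)%N, g i w == k & z i w]]|.

Definition Ybound (R : realType) (m n : nat) : nat :=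
  `|Num.floor (Num.sqrt (m%:R : R) * n%:R / 6)|%N.

Definition valid_deck (m n : nat) (d : {ffun 'I_(m * n) -> 'I_n}) : bool :=
  [forall k : 'I_n, #|[set i | d i == k]| == m].

Definition wind (R : realType) (Omega : finType) (m n : nat)
    (g : 'I_(m * n) -> Omega -> 'I_n) (t : 'I_(m * n)) (w : Omega) : R :=
  if ((cnt_a g (g t w) t w)%:R <= (m * n)%:R / 2 :> R) then 1 else 0.

From mathcomp Require Import all_boot all_order all_algebra.
From mathcomp Require Import reals.
From mathcomp Require Import ring lra zify.
Set Implicit Arguments. Unset Strict Implicit. Unset Printing Implicit Defensive.
Import Order.TTheory GRing.Theory Num.Theory.
Local Open Scope ring_scope.

(* Multiplied by [n], the sum is [\sum_k X_k], where [X_k] collects the terms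
   [n z_i - 1] of the rounds [i] in which [g_i = k] had already been guessed
   more than [mn/2] times; only one label can be guessed that often, so at most
   one [X_k] is nonzero.  With [D_k = n c_k - a_k - Y] and [D'_k = n c'_k - a'_k],
   where [a'_k], [c'_k] count only the other ("early") rounds, [X_k = D_k - (D'_k - Y)].
   While [a_k < mn - Y], (c) gives [n p = 1 - D_k / (mn - a_k - Y)] for the
   conditional probability [p] of [z_t = 1] when [g_t = k]: a drift of [D_k]
   towards 0.  Hence [Phi = \sum_k D'_k^2] and [Psi], which adds
   [D_k^2 - (D'_k - Y)^2] over late labels ([D_k] frozen to 0 once (c) no longer
   applies), grow in expectation by at most [n^2 E z_t + 3 Y^2 / mn] per round.
   Finally [X_k^2 <= 2 Psi + 8 Phi + 10 Y^2] pointwise, and Jensen's inequality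
   together with [36 Y^2 <= m n^2] gives [(E \sum_k X_k)^2 <= n^2 (10 \sum_i E z_i + m)]. *)

Section FiniteExpectation.
Variables (R : realType) (Omega : finType) (P : Omega -> R).

Lemma eq_Exp (X Y : Omega -> R) : (forall w, X w = Y w) -> Exp P X = Exp P Y.
Proof. by move=> XY; apply: eq_bigr => w _; rewrite XY. Qed.

Lemma ExpD (X Y : Omega -> R) : Exp P (fun w => X w + Y w) = Exp P X + Exp P Y.
Proof. by rewrite /Exp -big_split; apply: eq_bigr => w _; rewrite mulrDr. Qed.

Lemma ExpZ (c : R) (X : Omega -> R) : Exp P (fun w => c * X w) = c * Exp P X.
Proof. by rewrite /Exp mulr_sumr; apply: eq_bigr => w _; rewrite mulrCA. Qed.

Hypothesis P_ge0 : forall w, 0 <= P w.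

Lemma Exp_ge0 (X : Omega -> R) : (forall w, 0 <= X w) -> 0 <= Exp P X.
Proof. by move=> X_ge0; apply: sumr_ge0 => w _; rewrite mulr_ge0. Qed.

Lemma ler_Exp (X Y : Omega -> R) :
  (forall w, 0 < P w -> X w <= Y w) -> Exp P X <= Exp P Y.
Proof.
move=> XY; apply: ler_sum => w _.
have := P_ge0 w; rewrite le0r => /orP [/eqP ->|Pw]; first by rewrite !mul0r.
by rewrite ler_wpM2l ?XY ?ltW.
Qed.

Lemma condE_ge0 (T : eqType) (V : Omega -> T) (X : Omega -> R) w0 :
  (forall w, 0 <= X w) -> 0 <= condE P X V w0.
Proof.
by move=> X_ge0; rewrite /condE divr_ge0 //; apply: sumr_ge0 => w _; rewrite ?mulr_ge0.
Qed.

Lemma Exp_condE (T : eqType) (V : Omega -> T) (f X : Omega -> R) :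
  (forall w w', V w = V w' -> f w = f w') ->
  Exp P (fun w => f w * X w) = Exp P (fun w => f w * condE P X V w).
Proof.
move=> f_V; rewrite /Exp /condE.
set mass := fun w => \sum_(w' | V w' == V w) P w'.
have -> : \sum_w P w * (f w * ((\sum_(w' | V w' == V w) P w' * X w') / mass w)) =
    \sum_w \sum_(w' | V w' == V w) P w * f w / mass w * (P w' * X w').
  by apply: eq_bigr => w _; rewrite -mulr_sumr -/(mass w); ring.
rewrite (exchange_big_dep xpredT) //=; apply: eq_bigr => w' _.
have same_class w : V w' == V w ->
    P w * f w / mass w * (P w' * X w') = P w * (f w' / mass w' * (P w' * X w')).
  by move=> /eqP e; rewrite /mass e (f_V w' w e) !mulrA.
rewrite (eq_bigr _ same_class) -mulr_suml.
have -> : \sum_(w | true && (V w' == V w)) P w = mass w'.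
  by apply: eq_bigl => w; rewrite /= eq_sym.
have P_le_mass : P w' <= mass w'.
  by rewrite /mass (bigD1 w') //= lerDl; apply: sumr_ge0.
have := P_ge0 w'; rewrite le0r => /orP [/eqP ->|Pw]; first by rewrite !(mul0r, mulr0).
have mass_neq0 : mass w' != 0 by rewrite gt_eqF // (lt_le_trans Pw).
by field.
Qed.

Hypothesis P_sum1 : \sum_w P w = 1.

Lemma ExpC (c : R) : Exp P (fun => c) = c.
Proof. by rewrite /Exp -mulr_suml P_sum1 mul1r. Qed.

Lemma sqr_Exp_le (X : Omega -> R) : Exp P X ^+ 2 <= Exp P (fun w => X w ^+ 2).
Proof.
set mu := Exp P X.
have : 0 <= Exp P (fun w => (X w - mu) ^+ 2) by apply: Exp_ge0 => w; exact: sqr_ge0.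
have -> : Exp P (fun w => (X w - mu) ^+ 2) =
    Exp P (fun w => X w ^+ 2) + (-2 * mu) * Exp P X + Exp P (fun => mu ^+ 2).
  by rewrite -ExpZ -!ExpD; apply: eq_Exp => w; ring.
by rewrite ExpC -/mu; lra.
Qed.

(* One round of a potential argument: the increment is [b] or [c] according to
   [Z], and both are determined by the information [V]. *)
Lemma Exp_drift (T : eqType) (V : Omega -> T) (Z : Omega -> bool)
    (F F' b c : Omega -> R) (kap K : R) :
  (forall w w', V w = V w' -> b w = b w' /\ c w = c w') ->
  (forall w, 0 < P w -> F' w <= F w + (if Z w then b w else c w)) ->
  (forall w, 0 < P w -> let p := condE P (fun w => (Z w)%:R) V w in
     p * b w + (1 - p) * c w <= kap + K * p) ->
  Exp P F' <= Exp P F + kap + K * Exp P (fun w => (Z w)%:R).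
Proof.
move=> bc_V F'_le drift.
have /le_trans -> // : Exp P F' <= Exp P (fun w => F w + (c w + (b w - c w) * (Z w)%:R)).
  apply: ler_Exp => w Pw; apply: le_trans (F'_le w Pw) _.
  by case: (Z w); rewrite ?mulr1 ?mulr0; lra.
rewrite !ExpD -addrA lerD2l.
have bc_V' w w' : V w = V w' -> b w - c w = b w' - c w' by move=> /bc_V [-> ->].
rewrite (@Exp_condE _ V _ (fun w => (Z w)%:R) bc_V').
rewrite -[Exp P (fun w => (Z w)%:R)](eq_Exp (fun w => mul1r _)).
rewrite (@Exp_condE _ V (fun => 1)) // -ExpZ -(ExpC kap) -!ExpD.
by apply: ler_Exp => w Pw; have := drift w Pw; rewrite /= mul1r; lra.
Qed.

End FiniteExpectation.

Section RoundPrefixes.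
Variable N : nat.
Implicit Type Q : pred 'I_N.

Lemma big_prefixS (V : Type) (idx : V) (op : Monoid.com_law idx) (F : 'I_N -> V)
    (t : 'I_N) :
  \big[op/idx]_(i : 'I_N | (i < t.+1)%N) F i =
    op (\big[op/idx]_(i : 'I_N | (i < t)%N) F i) (F t).
Proof.
rewrite (bigD1 t) //= Monoid.mulmC; congr (op _ _).
by apply: eq_bigl => i; rewrite ltnS ltn_neqAle andbC.
Qed.

Lemma card_prefix0 Q : #|[set i : 'I_N | (i < 0)%N && Q i]| = 0%N.
Proof. by apply: eq_card0 => i; rewrite inE. Qed.

Lemma card_prefixS Q (t : 'I_N) :
  #|[set i : 'I_N | (i < t.+1)%N && Q i]| = (#|[set i : 'I_N | (i < t)%N && Q i]| + Q t)%N.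
Proof.
by rewrite -!sum1dep_card !big_mkcondr big_prefixS /=; case: (Q t).
Qed.

End RoundPrefixes.

Lemma sum_eq_but1 (V : zmodType) (I : finType) (F G : I -> V) (l : I) :
  (forall k, k != l -> F k = G k) -> \sum_k F k = \sum_k G k + (F l - G l).
Proof.
move=> FG; rewrite (bigD1 l) // [X in _ = X + _](bigD1 l) //=.
by rewrite (eq_bigr _ FG) addrAC subrKC addrC.
Qed.

(* If [K p = 1 + (s - v) / D], a step [v -> v + K Z - 1] with [Z] Bernoulli of
   parameter [p] changes [v^2] by at most [s^2 / D + K^2 p] on average. *)
Lemma bernoulli_sqr_drift (R : realFieldType) (K p v s D : R) :
  1 <= D -> K * p = 1 + (s - v) / D ->
  p * ((v + K - 1) ^+ 2 - v ^+ 2) + (1 - p) * ((v - 1) ^+ 2 - v ^+ 2)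
    <= s ^+ 2 / D + K ^+ 2 * p.
Proof.
move=> D_ge1 Kp; have D_gt0 : 0 < D by lra.
have -> : p * ((v + K - 1) ^+ 2 - v ^+ 2) + (1 - p) * ((v - 1) ^+ 2 - v ^+ 2) =
    -2 * v + 1 + 2 * (K * p) * (v - 1) + K ^+ 2 * p by ring.
rewrite Kp lerD2r.
have -> : -2 * v + 1 + 2 * (1 + (s - v) / D) * (v - 1) = (2 * (s - v) * (v - 1) - D) / D.
  by field; rewrite gt_eqF.
rewrite ler_pM2r ?invr_gt0 //.
by have := sqr_ge0 (s + 1 - 2 * v); have := sqr_ge0 s; nra.
Qed.

Lemma telescope_le (R : realFieldType) (N : nat) (u : nat -> R) (kap : R) (e : 'I_N -> R) :
  u 0%N <= 0 -> (forall t : 'I_N, u t.+1 <= u t + kap + e t) ->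
  u N <= N%:R * kap + \sum_(i : 'I_N) e i.
Proof.
move=> u0 uS.
suff bound t : (t <= N)%N -> u t <= t%:R * kap + \sum_(i : 'I_N | (i < t)%N) e i.
  by rewrite (eq_bigl (fun i : 'I_N => (i < N)%N)) ?bound // => i; rewrite ltn_ord.
elim: t => [_|t IH lt_tN]; first by rewrite big_pred0 // mul0r add0r.
have := uS (Ordinal lt_tN); rewrite /= => /le_trans -> //.
rewrite (big_prefixS _ e (Ordinal lt_tN)) /= -addn1 natrD.
by have := IH (ltnW lt_tN); lra.
Qed.

Section LateRounds.
Variables (R : realType) (m n : nat).
Hypotheses (m_gt0 : (0 < m)%N) (n_gt0 : (0 < n)%N).
Variables (Omega : finType) (P : Omega -> R).
Hypotheses (P_ge0 : forall w, 0 <= P w) (P_sum1 : \sum_w P w = 1).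
Variables (g : 'I_(m * n) -> Omega -> 'I_n) (z : 'I_(m * n) -> Omega -> bool).

Local Notation N := (m * n)%N.
Local Notation Y := ((Ybound R m n)%:R : R).

Hypothesis Ha : forall w, 0 < P w -> forall (k : 'I_n) (t : nat), (t <= m * n)%N ->
  (m%:R - Num.max ((m * n)%:R - (cnt_a g k t w)%:R - (Ybound R m n)%:R) 0
     <= (cnt_c g z k t w)%:R :> R)
  /\ (cnt_c g z k t w <= m)%N.
Hypothesis Hc : forall (t : 'I_(m * n)) w, 0 < P w ->
  (cnt_a g (g t w) t w)%:R < (m * n)%:R - (Ybound R m n)%:R :> R ->
  condE P (fun w' => (z t w')%:R) (fun w' => (pre_le g t w', pre_lt z t w')) w
  = ((m%:R - (cnt_c g z (g t w) t w)%:R)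
      / ((m * n)%:R - (cnt_a g (g t w) t w)%:R - (Ybound R m n)%:R)).

(* [early k i w] holds iff [a(k, i) <= mn/2], so that [w_i = early (g_i) i];
   [a_early], [c_early] count like [a], [c] but only over such rounds. *)
Definition thr := (N./2).+1.
Definition early k (i : nat) w := (cnt_a g k i w < thr)%N.
Definition a_early k t w :=
  #|[set i : 'I_N | (i < t)%N && ((g i w == k) && early k i w)]|.
Definition c_early k t w :=
  #|[set i : 'I_N | (i < t)%N && ((g i w == k) && early k i w && z i w)]|.

Lemma cnt_aS k (t : 'I_N) w : cnt_a g k t.+1 w = (cnt_a g k t w + (g t w == k))%N.
Proof. exact: card_prefixS. Qed.

Lemma cnt_cS k (t : 'I_N) w :
  cnt_c g z k t.+1 w = (cnt_c g z k t w + (g t w == k) * z t w)%N.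
Proof. by rewrite /cnt_c card_prefixS; case: (g t w == k); case: (z t w). Qed.

Lemma a_earlyS k (t : 'I_N) w :
  a_early k t.+1 w = (a_early k t w + ((g t w == k) && early k t w))%N.
Proof. exact: card_prefixS. Qed.

Lemma c_earlyS k (t : 'I_N) w :
  c_early k t.+1 w = (c_early k t w + ((g t w == k) && early k t w) * z t w)%N.
Proof.
by rewrite /c_early card_prefixS; case: (g t w == k); case: (early k t w); case: (z t w).
Qed.

Lemma early_succ k (t : 'I_N) w : early k t.+1 w -> early k t w.
Proof. by rewrite /early cnt_aS; lia. Qed.

Lemma early_counts k w t : (t <= N)%N -> early k t w ->
  a_early k t w = cnt_a g k t w /\ c_early k t w = cnt_c g z k t w.
Proof.
elim: t => [|t IH] le_tN; first by rewrite /a_early /c_early /cnt_a /cnt_c !card_prefix0.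
pose t' : 'I_N := Ordinal le_tN.
move=> /(early_succ (t := t')) early_t; have [IHa IHc] := IH (ltnW le_tN) early_t.
move: (a_earlyS k t' w) (c_earlyS k t' w) (cnt_aS k t' w) (cnt_cS k t' w).
by rewrite /= early_t andbT IHa IHc => -> -> -> ->.
Qed.

Definition view (t : nat) w := (pre_le g t w, pre_lt z t w).

Lemma cnt_a_agree k s w w' : (forall i : 'I_N, (i < s)%N -> g i w = g i w') ->
  cnt_a g k s w = cnt_a g k s w'.
Proof. by move=> gE; apply: eq_card => i; rewrite !inE; case: ltnP => //= /gE ->. Qed.

Lemma view_counts (t : 'I_N) w w' : view t w = view t w' ->
  g t w = g t w' /\
  forall k, [/\ cnt_a g k t w = cnt_a g k t w', cnt_c g z k t w = cnt_c g z k t w',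
                a_early k t w = a_early k t w' & c_early k t w = c_early k t w'].
Proof.
case=> /ffunP gE /ffunP zE.
have g_le (i : 'I_N) : (i <= t)%N -> g i w = g i w'.
  by move=> le_it; move: (gE i); rewrite !ffunE le_it => -[].
have g_lt (i : 'I_N) : (i < t)%N -> g i w = g i w' by move/ltnW; exact: g_le.
have z_lt (i : 'I_N) : (i < t)%N -> z i w = z i w'.
  by move=> lt_it; move: (zE i); rewrite !ffunE lt_it => -[].
have a_lt k (i : 'I_N) : (i < t)%N -> cnt_a g k i w = cnt_a g k i w'.
  by move=> lt_it; apply: cnt_a_agree => j lt_ji; apply: g_lt (ltn_trans lt_ji lt_it).
split=> [|k]; first exact: g_le.
split; first exact: cnt_a_agree.
all: apply: eq_card => i; rewrite !inE; case: ltnP => //= lt_it.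
all: by rewrite g_lt ?z_lt // /early a_lt.
Qed.

Definition dev k t w : R := n%:R * (cnt_c g z k t w)%:R - (cnt_a g k t w)%:R - Y.
Definition dev_early k t w : R := n%:R * (c_early k t w)%:R - (a_early k t w)%:R.
Definition late_dev k t w : R := dev k t w - (dev_early k t w - Y).
(* [slack] is the denominator in (c), which applies while [live]. *)
Definition slack k t w : R := N%:R - (cnt_a g k t w)%:R - Y.
Definition live k t w := 0 < slack k t w.
Definition dev_cut k t w : R := if live k t w then dev k t w else 0.
Definition prob_z (t : 'I_N) w := condE P (fun w' => (z t w')%:R) (view t) w.

Lemma devS k (t : 'I_N) w : dev k t.+1 w =
  dev k t w + (if g t w == k then n%:R * (z t w)%:R - 1 else 0).
Proof.
rewrite /dev cnt_aS cnt_cS !natrD natrM.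
by case: (g t w == k); case: (z t w); rewrite /=; ring.
Qed.

Lemma dev_earlyS k (t : 'I_N) w : dev_early k t.+1 w = dev_early k t w +
  (if (g t w == k) && early k t w then n%:R * (z t w)%:R - 1 else 0).
Proof.
rewrite /dev_early a_earlyS c_earlyS !natrD natrM.
by case: (_ && _); case: (z t w); rewrite /=; ring.
Qed.

Lemma slackS k (t : 'I_N) w : slack k t.+1 w <= slack k t w.
Proof. by rewrite /slack cnt_aS natrD; case: (g t w == k); rewrite /=; lra. Qed.

Lemma dev_earlyE k t w : (t <= N)%N -> early k t w -> dev_early k t w = dev k t w + Y.
Proof.
by move=> le_tN /(early_counts le_tN) [a_eq c_eq]; rewrite /dev_early /dev a_eq c_eq; ring.
Qed.

Lemma Y_bounds : 36 * Y ^+ 2 <= m%:R * n%:R ^+ 2 /\ 6 * Y <= N%:R.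
Proof.
set x := Num.sqrt (m%:R : R) * n%:R / 6.
have x_ge0 : 0 <= x by rewrite /x !mulr_ge0 ?sqrtr_ge0 ?invr_ge0.
have Y_le_x : Y <= x.
  by rewrite /Ybound -/x natr_absz ger0_norm ?floor_ge0 //; exact: floor_le.
have x_sqr : 36 * x ^+ 2 = m%:R * n%:R ^+ 2.
  by rewrite /x !exprMn sqr_sqrtr ?ler0n //; field.
have m_ge1 : 1 <= (m%:R : R) by rewrite ler1n.
have Y_sqr : 36 * Y ^+ 2 <= m%:R * n%:R ^+ 2.
  by rewrite -x_sqr; have Y_ge0 : 0 <= Y by []; nra.
split=> //; rewrite natrM -(ler_sqr (R := R)) ?nnegrE ?mulr_ge0 //.
have : (m%:R : R) * n%:R ^+ 2 <= m%:R ^+ 2 * n%:R ^+ 2.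
  by rewrite ler_wpM2r ?sqr_ge0 // expr2; nra.
by rewrite exprMn; nra.
Qed.

Lemma slack_ge1 k t w : live k t w -> 1 <= slack k t w.
Proof.
rewrite /live /slack => sl_gt0.
have : (cnt_a g k t w + Ybound R m n < N)%N by rewrite -(ltr_nat R) natrD; lra.
by rewrite -(ler_nat R) -addn1 !natrD; lra.
Qed.

Lemma early_slack k t w : early k t w -> N%:R <= 3 * slack k t w.
Proof.
rewrite /early /thr ltnS geq_half_double -(ler_nat R) -muln2 natrM /slack => a_le.
by have [_ Y_le] := Y_bounds; lra.
Qed.

Lemma prob_z_val (t : 'I_N) w : 0 < P w -> live (g t w) t w ->
  n%:R * prob_z t w = 1 - dev (g t w) t w / slack (g t w) t w.
Proof.
move=> Pw live_t; have := slack_ge1 live_t; rewrite /prob_z /view Hc //; last first.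
  by move: live_t; rewrite /live /slack; lra.
rewrite /dev /slack natrM => sl_ge1.
by field; rewrite gt_eqF //; lra.
Qed.

Lemma prob_z_ge0 (t : 'I_N) w : 0 <= prob_z t w.
Proof. exact: condE_ge0. Qed.

Definition Phi t w := \sum_k dev_early k t w ^+ 2.

Lemma Phi_succ (t : 'I_N) w : Phi t.+1 w = Phi t w +
  (if early (g t w) t w
   then (dev_early (g t w) t w + n%:R * (z t w)%:R - 1) ^+ 2 - dev_early (g t w) t w ^+ 2
   else 0).
Proof.
rewrite /Phi (sum_eq_but1 (G := fun k => dev_early k t w ^+ 2) (l := g t w)) => [|k ne_k].
  rewrite dev_earlyS eqxx /=; case: ifP => _ /=; last by rewrite addr0 subrr addr0.
  by rewrite !addrA.
by rewrite dev_earlyS eq_sym (negbTE ne_k) addr0.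
Qed.

Lemma N_gt0 : 0 < N%:R :> R.
Proof. by rewrite ltr0n muln_gt0 m_gt0. Qed.

Lemma Phi_step (t : 'I_N) : Exp P (Phi t.+1) <=
  Exp P (Phi t) + 3 * Y ^+ 2 / N%:R + n%:R ^+ 2 * Exp P (fun w => (z t w)%:R).
Proof.
pose b w := if early (g t w) t w
  then (dev_early (g t w) t w + n%:R - 1) ^+ 2 - dev_early (g t w) t w ^+ 2 else 0.
pose c w := if early (g t w) t w
  then (dev_early (g t w) t w - 1) ^+ 2 - dev_early (g t w) t w ^+ 2 else 0.
apply: (Exp_drift P_ge0 P_sum1 (V := view t) (b := b) (c := c)).
- move=> w w' /view_counts [gE /(_ (g t w)) [a_eq _ ae_eq ce_eq]].
  by rewrite /b /c -gE /early /dev_early a_eq ae_eq ce_eq.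
- move=> w _; rewrite Phi_succ /b /c.
  by case: ifP => _; case: (z t w); rewrite /= ?mulr1 ?mulr0 ?addr0.
move=> w Pw /=; rewrite -/(prob_z t w) /b /c; case: ifP => early_t; last first.
  rewrite !mulr0 addr0 addr_ge0 ?(mulr_ge0 (sqr_ge0 _) (prob_z_ge0 t w)) //.
  by rewrite divr_ge0 ?mulr_ge0 ?sqr_ge0.
have slack_N := early_slack early_t.
have live_t : live (g t w) t w by rewrite /live; have := N_gt0; lra.
apply: le_trans (bernoulli_sqr_drift (s := Y) (slack_ge1 live_t) _) _.
  by rewrite prob_z_val // (dev_earlyE (ltnW (ltn_ord t)) early_t); ring.
have sl_gt0 : 0 < slack (g t w) t w by have := slack_ge1 live_t; lra.
have N_pos := N_gt0.
rewrite lerD2r ler_pdivlMr // mulrAC ler_pdivrMr //.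
by have := sqr_ge0 Y; nra.
Qed.

Definition Psi_term k t w :=
  if early k t w then 0 else dev_cut k t w ^+ 2 - (dev_early k t w - Y) ^+ 2.
Definition Psi t w := \sum_k Psi_term k t w.

Lemma Psi_term_succ_other k (t : 'I_N) w : g t w != k -> Psi_term k t.+1 w = Psi_term k t w.
Proof.
move/negbTE=> ne.
rewrite /Psi_term /dev_cut /live /slack /early /dev /dev_early.
by rewrite cnt_aS cnt_cS a_earlyS c_earlyS ne !addn0.
Qed.

Lemma Psi_term_succ_le (t : 'I_N) w (l := g t w) : Psi_term l t.+1 w <= Psi_term l t w +
  (if ~~ early l t w && live l t w
   then (dev l t w + n%:R * (z t w)%:R - 1) ^+ 2 - dev l t w ^+ 2 else 0).
Proof.
have cut_le s : dev_cut l s w ^+ 2 <= dev l s w ^+ 2.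
  by rewrite /dev_cut; case: ifP; rewrite ?expr0n ?sqr_ge0.
have dev_t1 : dev l t.+1 w = dev l t w + (n%:R * (z t w)%:R - 1) by rewrite devS eqxx.
rewrite /Psi_term; case: (boolP (early l t w)) => [early_t | late_t] /=.
  case: ifP => _; first by rewrite addr0.
  rewrite !addr0 subr_le0 dev_earlyS eqxx early_t /=.
  rewrite (dev_earlyE (ltnW (ltn_ord t)) early_t).
  by apply: le_trans (cut_le _) _; rewrite dev_t1 [_ + Y + _]addrAC addrK.
have -> : early l t.+1 w = false by apply: contraNF late_t; exact: early_succ.
rewrite dev_earlyS eqxx (negbTE late_t) addr0 {2}/dev_cut.
case: ifP => live_t.
  by have := cut_le t.+1; rewrite dev_t1 !addrA; lra.
have -> : dev_cut l t.+1 w = 0.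
  rewrite /dev_cut ifF //; apply: contraFF live_t.
  by rewrite /live => /lt_le_trans; apply; exact: slackS.
by rewrite addr0.
Qed.

Lemma Psi_step (t : 'I_N) : Exp P (Psi t.+1) <=
  Exp P (Psi t) + 0 + n%:R ^+ 2 * Exp P (fun w => (z t w)%:R).
Proof.
pose b w := if ~~ early (g t w) t w && live (g t w) t w
  then (dev (g t w) t w + n%:R - 1) ^+ 2 - dev (g t w) t w ^+ 2 else 0.
pose c w := if ~~ early (g t w) t w && live (g t w) t w
  then (dev (g t w) t w - 1) ^+ 2 - dev (g t w) t w ^+ 2 else 0.
apply: (Exp_drift P_ge0 P_sum1 (V := view t) (b := b) (c := c)).
- move=> w w' /view_counts [gE /(_ (g t w)) [a_eq c_eq _ _]].
  by rewrite /b /c -gE /early /live /slack /dev a_eq c_eq.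
- move=> w _; rewrite /Psi (sum_eq_but1 (G := fun k => Psi_term k t w) (l := g t w)).
    have := Psi_term_succ_le t w; rewrite /b /c.
    by case: ifP => _; case: (z t w); rewrite /= ?mulr1 ?mulr0 ?addr0; lra.
  by move=> k ne; rewrite Psi_term_succ_other // eq_sym.
move=> w Pw /=; rewrite -/(prob_z t w) /b /c; case: ifP => [/andP [_ live_t] | _]; last first.
  by rewrite !mulr0 addr0 add0r mulr_ge0 ?sqr_ge0 ?prob_z_ge0.
apply: le_trans (bernoulli_sqr_drift (s := 0) (slack_ge1 live_t) _) _.
  by rewrite prob_z_val // sub0r mulNr.
by rewrite expr0n mul0r.
Qed.

Lemma Phi_bound :
  Exp P (Phi N) <= 3 * Y ^+ 2 + n%:R ^+ 2 * \sum_(i : 'I_N) Exp P (fun w => (z i w)%:R).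
Proof.
rewrite mulr_sumr.
have := telescope_le (u := fun t => Exp P (Phi t)) _ Phi_step.
rewrite mulrC divfK ?gt_eqF ?N_gt0 //; apply.
rewrite /Exp big1 // => w _; rewrite /Phi big1 ?mulr0 // => k _.
by rewrite /dev_early /a_early /c_early !card_prefix0 mulr0 subrr expr0n.
Qed.

Lemma Psi_bound : Exp P (Psi N) <= n%:R ^+ 2 * \sum_(i : 'I_N) Exp P (fun w => (z i w)%:R).
Proof.
rewrite mulr_sumr.
have := telescope_le (u := fun t => Exp P (Psi t)) _ Psi_step.
rewrite mulr0 add0r; apply.
rewrite /Exp big1 // => w _; rewrite /Psi big1 ?mulr0 // => k _.
by rewrite /Psi_term /early /cnt_a card_prefix0.
Qed.

Lemma wind_early (t : 'I_N) w : wind R g t w = if early (g t w) t w then 1 else 0.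
Proof.
rewrite /wind /early /thr; congr (if _ then _ else _).
by rewrite ltnS geq_half_double -(ler_nat R) ler_pdivlMr // -muln2 !natrM.
Qed.

Lemma late_dev_sumS (t : 'I_N) w : \sum_k late_dev k t.+1 w =
  \sum_k late_dev k t w + n%:R * ((1 - wind R g t w) * ((z t w)%:R - n%:R^-1)).
Proof.
rewrite (sum_eq_but1 (G := fun k => late_dev k t w) (l := g t w)) => [|k ne]; last first.
  by rewrite /late_dev devS dev_earlyS eq_sym (negbTE ne) !addr0.
congr (_ + _); rewrite /late_dev devS dev_earlyS eqxx wind_early.
have n_neq0 : (n%:R : R) != 0 by rewrite pnatr_eq0 -lt0n.
by case: (early _ t w); case: (z t w); rewrite /=; field.
Qed.

Lemma scaled_late_sum w :
  n%:R * \sum_(i : 'I_N) (1 - wind R g i w) * ((z i w)%:R - n%:R^-1) = \sum_k late_dev k N w.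
Proof.
suff prefix t : (t <= N)%N -> n%:R * \sum_(i : 'I_N | (i < t)%N)
    (1 - wind R g i w) * ((z i w)%:R - n%:R^-1) = \sum_k late_dev k t w.
  by rewrite -prefix //; congr (_ * _); apply: eq_bigl => i; rewrite ltn_ord.
elim: t => [_|t IH lt_tN].
  rewrite big_pred0 // mulr0 big1 // => k _.
  by rewrite /late_dev /dev /dev_early /cnt_a /cnt_c /a_early /c_early !card_prefix0; ring.
have := late_dev_sumS (Ordinal lt_tN) w; rewrite /= => ->.
by rewrite (big_prefixS _ _ (Ordinal lt_tN)) /= mulrDr IH // ltnW.
Qed.

Lemma late_unique w k k' : ~~ early k N w -> ~~ early k' N w -> k = k'.
Proof.
rewrite /early /thr -!leqNgt => late_k late_k'; apply/eqP/negPn/negP => ne.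
set A := [set i : 'I_N | (i < N)%N && (g i w == k)].
set B := [set i : 'I_N | (i < N)%N && (g i w == k')].
have AB0 : A :&: B = set0.
  apply/setP => i; rewrite !inE; apply/negbTE/negP.
  by case/andP=> /andP [_ /eqP gk] /andP [_ /eqP gk']; rewrite -gk -gk' eqxx in ne.
have : (#|A| + #|B| <= N)%N.
  by rewrite -cardsUI AB0 cards0 addn0; apply: leq_trans (max_card _) _; rewrite card_ord.
rewrite /A /B -/(cnt_a g k N w) -/(cnt_a g k' N w).
by have := odd_double_half N; have := leq_b1 (odd N); lia.
Qed.

Lemma late_dev_eq0 k w : early k N w -> late_dev k N w = 0.
Proof. by move=> early_k; rewrite /late_dev (dev_earlyE (leqnn N) early_k) addrK subrr. Qed.

(* Once the label is no longer live, (a) forces [c = m], so the deviation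
   [mn - a - Y] lies in [[-Y, 0]]. *)
Lemma dev_sqr_le_cut k w : 0 < P w -> dev k N w ^+ 2 <= dev_cut k N w ^+ 2 + Y ^+ 2.
Proof.
move=> Pw; rewrite /dev_cut; case: ifP => [_|]; first by rewrite lerDl sqr_ge0.
rewrite /live /slack => /negbT; rewrite -leNgt => slack_le0.
have [c_lb c_ub] := Ha Pw k (leqnn N); rewrite -(ler_nat R) in c_ub.
rewrite max_r in c_lb; last by lra.
have a_le : (cnt_a g k N w)%:R <= N%:R :> R.
  by rewrite ler_nat; apply: leq_trans (max_card _) _; rewrite card_ord.
rewrite expr0n add0r /dev [X in n%:R * X](_ : _ = m%:R); last by lra.
rewrite -natrM mulnC; set d := N%:R - _ - Y.
have : 0 <= Y - d by rewrite /d; lra.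
have : 0 <= Y + d by rewrite /d; lra.
by move=> *; nra.
Qed.

Lemma sqr_late_sum_le w : 0 < P w ->
  (\sum_k late_dev k N w) ^+ 2 <= 2 * Psi N w + 8 * Phi N w + 10 * Y ^+ 2.
Proof.
move=> Pw; have Phi_ge0 : 0 <= Phi N w by apply: sumr_ge0 => k _; exact: sqr_ge0.
case: (pickP (fun k => ~~ early k N w)) => [k0 late_k0 | all_early]; last first.
  rewrite big1 => [|k _]; last exact/late_dev_eq0/negbFE/all_early.
  rewrite /Psi big1 => [|k _]; last by rewrite /Psi_term (negbFE (all_early k)).
  by rewrite expr0n /=; have := sqr_ge0 Y; lra.
have early_k k : k != k0 -> early k N w.
  by move=> ne; apply/negPn/negP => late_k; rewrite (late_unique late_k late_k0) eqxx in ne.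
rewrite (bigD1 k0) //= big1 ?addr0 => [|k ne]; last exact/late_dev_eq0/early_k.
rewrite /Psi (bigD1 k0) //= big1 ?addr0 => [|k ne]; last by rewrite /Psi_term early_k.
have := dev_sqr_le_cut k0 Pw; rewrite /Psi_term /late_dev (negbTE late_k0).
set d := dev k0 N w; set e := dev_early k0 N w; set c := dev_cut k0 N w.
have Phi_k0 : e ^+ 2 <= Phi N w.
  by rewrite /Phi (bigD1 k0) //= lerDl sumr_ge0 // => k _; exact: sqr_ge0.
by have := sqr_ge0 (d + (e - Y)); have := sqr_ge0 (e + Y); nra.
Qed.

Lemma Exp_late_sum_sqr :
  Exp P (fun w => \sum_(i : 'I_N) (1 - wind R g i w) * ((z i w)%:R - n%:R^-1)) ^+ 2
    <= 10 * \sum_(i : 'I_N) Exp P (fun w => (z i w)%:R) + m%:R.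
Proof.
set S := \sum_(i : 'I_N) _.
have n_neq0 : (n%:R : R) != 0 by rewrite pnatr_eq0 -lt0n.
have scaled w : \sum_(i : 'I_N) (1 - wind R g i w) * ((z i w)%:R - n%:R^-1) =
    n%:R^-1 * \sum_k late_dev k N w by rewrite -scaled_late_sum mulKf.
rewrite (eq_Exp _ scaled) ExpZ exprMn.
have Exp_sqr : Exp P (fun w => \sum_k late_dev k N w) ^+ 2 <= n%:R ^+ 2 * (10 * S + m%:R).
  apply: le_trans (sqr_Exp_le P_ge0 P_sum1 _) _.
  pose bound w := 2 * Psi N w + 8 * Phi N w + 10 * Y ^+ 2.
  apply: le_trans (ler_Exp P_ge0 (Y := bound) sqr_late_sum_le) _.
  rewrite /bound !ExpD !ExpZ ExpC //.
  by have [Y_sqr _] := Y_bounds; have := Phi_bound; have := Psi_bound; rewrite -/S; nra.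
apply: le_trans (ler_wpM2l (sqr_ge0 _) Exp_sqr) _.
by rewrite mulrA -exprMn mulVf // expr1n mul1r.
Qed.

End LateRounds.

Theorem lemma2p3 (R : realType) (m n : nat)
  (Hm : (0 < m)%N) (Hn : (0 < n)%N)
  (Hnm : 1200 * Num.sqrt (m%:R : R) <= n%:R)
  (* finite probability space (already containing the extension carrying z) *)
  (Omega : finType) (P : Omega -> R) (HP : is_pmf P)
  (* the shuffled deck, uniform over all arrangements with m copies of each label *)
  (deck : Omega -> {ffun 'I_(m * n) -> 'I_n})
  (Hdeck : forall d, Pr P (fun w => deck w == d) =
     (if valid_deck d then (#|[pred d' : {ffun 'I_(m * n) -> 'I_n} | valid_deck d']|%:R)^-1 else 0))
  (* the guesser's private randomness, independent of the deck *)
  (S : finType) (xi : Omega -> S)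
  (Hindep : forall d s, Pr P (fun w => (deck w == d) && (xi w == s)) =
     Pr P (fun w => deck w == d) * Pr P (fun w => xi w == s))
  (* the fixed (randomized) strategy: guess in round t from y_1..y_{t-1} and the seed *)
  (strat : 'I_(m * n) -> seq bool -> S -> 'I_n)
  (g : 'I_(m * n) -> Omega -> 'I_n) (y z : 'I_(m * n) -> Omega -> bool)
  (Hg : forall t w, g t w = strat t (map (fun i : 'I_(m * n) => y i w) (filter (fun i : 'I_(m * n) => (i < t)%N) (enum 'I_(m * n)))) (xi w))
  (Hy : forall t w, y t w = (deck w t == g t w))
  (* (a) *)
  (Ha : forall w, 0 < P w -> forall (k : 'I_n) (t : nat), (t <= m * n)%N ->
     (m%:R - Num.max ((m * n)%:R - (cnt_a g k t w)%:R - (Ybound R m n)%:R) 0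
        <= (cnt_c g z k t w)%:R :> R)
     /\ (cnt_c g z k t w <= m)%N)
  (* (b) *)
  (Hb : forall (t : 'I_(m * n)) w0, 0 < P w0 ->
     forall (a : {ffun 'I_(m * n) -> bool}) w1,
     condPr P (fun w => [forall i : 'I_(m * n), (i <= t)%N ==> (z i w == a i)]
                        && (pre_le g (m * n) w == pre_le g (m * n) w1)
                        && (pre_le y (m * n) w == pre_le y (m * n) w1))
            (fun w => (pre_le g t w, pre_le y t w)) w0
     = (\prod_(i : 'I_(m * n) | (i <= t)%N)
          condPr P (fun w => z i w == a i) (fun w => (pre_le g t w, pre_le y t w)) w0)
       * condPr P (fun w => (pre_le g (m * n) w == pre_le g (m * n) w1)
                            && (pre_le y (m * n) w == pre_le y (m * n) w1))
            (fun w => (pre_le g t w, pre_le y t w)) w0)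
  (* (c) *)
  (Hc : forall (t : 'I_(m * n)) w, 0 < P w ->
     (cnt_a g (g t w) t w)%:R < (m * n)%:R - (Ybound R m n)%:R :> R ->
     condE P (fun w' => (z t w')%:R) (fun w' => (pre_le g t w', pre_lt z t w')) w
     = ((m%:R - (cnt_c g z (g t w) t w)%:R)
         / ((m * n)%:R - (cnt_a g (g t w) t w)%:R - (Ybound R m n)%:R)))
  (* (d) *)
  (Hd : forall (t : 'I_(m * n)) w, 0 < P w ->
     condE P (fun w' => (y t w')%:R) (fun w' => (pre_le g t w', pre_lt y t w')) w
       <= condE P (fun w' => (z t w')%:R) (fun w' => (pre_le g t w', pre_lt z t w')) w ->
     (y t w <= z t w)%N) :
  `| Exp P (fun w => \sum_(i : 'I_(m * n)) (1 - wind R g i w) * ((z i w)%:R - n%:R^-1)) |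
    <= 2 * Num.sqrt (6 * (\sum_(i : 'I_(m * n)) Exp P (fun w => (z i w)%:R)) + 8 * m%:R).
Proof.
have [P_ge0 P_sum1] := HP.
have := Exp_late_sum_sqr Hm Hn P_ge0 P_sum1 Ha Hc.
set E := Exp P _; set sumEz := \sum_(i : 'I_(m * n)) _ => E_sqr.
have sumEz_ge0 : 0 <= sumEz by apply: sumr_ge0 => i _; apply: Exp_ge0 => // w.
have m_ge0 : 0 <= m%:R :> R := ler0n _ _.
rewrite -(ler_sqr (R := R)) ?nnegrE ?normr_ge0 ?mulr_ge0 ?sqrtr_ge0 //.
rewrite real_normK ?num_real // exprMn sqr_sqrtr; last by lra.
by apply: le_trans E_sqr _; lra.
Qed.
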